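(* Let $p$ be a prime and let $a,b\in\mathbb{C}_p$ with $a\neq0$, $b\neq0$, $a\neq b$ and $|a|_p<|b|_p$. Let $P=-\frac1b$, $D=\mathbb{C}_p\setminus\{P\}$, $f(x)=\frac{ax^2}{bx+1}$ on $D$, $x_1=0$, $x_2=\frac{1}{a-b}$. For $n\geq0$ put $r_n=\frac{|b|_p^{n-1}}{|a|_p^{n}}$, and put $l_0=0$, $l_{n+1}=\frac{|a|_p^{n}}{|b|_p^{n+1}}$. Define $\Omega=\{x\in D:\ x^{(i)}=P\text{ for some } i\ge1\}$, $\Psi=\{x\in D\setminus\{x_2\}:\ x^{(j)}=x_2\text{ for some } j\ge1\}$, $\Sigma=\{x\in D\setminus\{x_1,x_2\}:\ x^{(k)}=x\text{ for some }k\ge 2\}$. Then $$\Omega\cup\Psi\cup\Sigma\subset\bigcup_{i=1}^{\infty}S_{r_i}(x_1)\cup\bigcup_{j=0}^{\infty}S_{l_j}(P).$$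
   Context: $\mathbb{C}_p$ is the field of complex $p$-adic numbers with $p$-adic norm $|\cdot|_p$. For $c\in\mathbb{C}_p$ and $r\ge0$, $S_r(c)=\{x\in\mathbb{C}_p:|x-c|_p=r\}$. For $x\in D$, $x^{(n)}=f^n(x)$ denotes the $n$-th iterate of $f$ at $x$ (defined as long as no earlier iterate equals $P$). *)

From HB Require Import structures.
From mathcomp Require Import all_boot all_order all_algebra.
From mathcomp Require Import reals.
Set Implicit Arguments. Unset Strict Implicit. Unset Printing Implicit Defensive.
Import Order.TTheory GRing.Theory Num.Theory.
Local Open Scope ring_scope.

Definition is_nonarch_abs (K : fieldType) (R : realFieldType) (v : K -> R) :=
  [/\ forall x, 0 <= v x,
      forall x, v x = 0 <-> x = 0,
      forall x y, v (x * y) = v x * v y &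
      forall x y, v (x + y) <= Num.max (v x) (v y)].

Definition v_complete (K : fieldType) (R : realFieldType) (v : K -> R) :=
  forall u : nat -> K,
    (forall e : R, 0 < e -> exists N : nat, forall m n : nat,
        (N <= m)%N -> (N <= n)%N -> v (u m - u n) < e) ->
    exists l : K, forall e : R, 0 < e -> exists N : nat, forall n : nat,
        (N <= n)%N -> v (u n - l) < e.

Definition Cp_like (p : nat) (K : closedFieldType) (R : realType) (v : K -> R) :=
  [/\ prime p, is_nonarch_abs v, v (p%:R) = (p%:R)^-1 & v_complete v].

Definition sphere (K : fieldType) (R : realFieldType) (v : K -> R) (c : K) (r : R) :=
  fun x : K => v (x - c) = r.

Section Dyn.
Variables (K : fieldType) (a b : K).

Definition pole : K := - b^-1.
Definition fmap (x : K) : K := a * x ^+ 2 / (b * x + 1).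
Definition x1 : K := 0.
Definition x2 : K := (a - b)^-1.

(* x^(n) = iter n fmap x; it is defined iff x^(k) <> P for all k < n *)
Definition orbit_defined (x : K) (n : nat) : Prop :=
  forall k : nat, (k < n)%N -> iter k fmap x <> pole.

Definition Omega (x : K) : Prop :=
  x <> pole /\ exists i : nat, (1 <= i)%N /\ orbit_defined x i /\ iter i fmap x = pole.

Definition Psi (x : K) : Prop :=
  x <> pole /\ x <> x2 /\
  exists j : nat, (1 <= j)%N /\ orbit_defined x j /\ iter j fmap x = x2.

Definition Sigma (x : K) : Prop :=
  x <> pole /\ x <> x1 /\ x <> x2 /\
  exists k : nat, (2 <= k)%N /\ orbit_defined x k /\ iter k fmap x = x.
End Dyn.

Definition radius_r (K : fieldType) (R : realFieldType) (v : K -> R) (a b : K) (n : nat) : R :=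
  v b ^+ n.-1 / v a ^+ n.          (* used only for n >= 1 *)

Definition radius_l (K : fieldType) (R : realFieldType) (v : K -> R) (a b : K) (n : nat) : R :=
  match n with
  | 0 => 0
  | m.+1 => v a ^+ m / v b ^+ m.+1
  end.

(* Put c = |P| = 1/|b|.  The ultrametric inequality gives
   |f(x)| = |a| |x|^2 / (|b| |x - P|).  On the disk |x| < c one has |x - P| = c,
   so f maps the disk into itself and such orbits never reach the circle
   |x| = c, on which P and x_2 lie.  Outside the closed disk |x - P| = |x|,
   so f multiplies |x| by |a|/|b| < 1; an orbit started there can reach the
   circle, or come back to x, only if |x| = r_i for some i.  On the circle
   |f(x)| |x - P| = |a|/|b|^3 and, by the previous two facts, |f(x)| is c or
   some r_i, whence |x - P| = l_2 or l_(i+2).  Points of the open disk lie on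
   S_(l_1)(P).  Only the non-archimedean absolute value is used. *)
From HB Require Import structures.
From mathcomp Require Import all_boot all_order all_algebra.
From mathcomp Require Import reals.
From mathcomp Require Import ring.
Set Implicit Arguments. Unset Strict Implicit. Unset Printing Implicit Defensive.
Import Order.TTheory GRing.Theory Num.Theory.
Local Open Scope ring_scope.

Section NonArchimedeanAbs.
Variables (K : fieldType) (R : realFieldType) (v : K -> R).
Hypothesis habs : is_nonarch_abs v.

Lemma absv_ge0 x : 0 <= v x.
Proof. by case: habs. Qed.

Lemma absv_eq0 x : v x = 0 <-> x = 0.
Proof. by case: habs. Qed.

Lemma absvM x y : v (x * y) = v x * v y.
Proof. by case: habs. Qed.

Lemma absvD_le x y : v (x + y) <= Num.max (v x) (v y).
Proof. by case: habs. Qed.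

Lemma absv0 : v 0 = 0.
Proof. exact/absv_eq0. Qed.

Lemma absv_gt0 x : x != 0 -> 0 < v x.
Proof.
move=> x_neq0; rewrite lt_def absv_ge0 andbT.
by apply/eqP => /absv_eq0/eqP; rewrite (negbTE x_neq0).
Qed.

Lemma absv1 : v 1 = 1.
Proof.
have v1_neq0 : v 1 != 0 by rewrite gt_eqF ?absv_gt0 ?oner_eq0.
by apply: (mulfI v1_neq0); rewrite -absvM !mulr1.
Qed.

Lemma absvN x : v (- x) = v x.
Proof.
have : v (-1) ^+ 2 == 1 ^+ 2 by rewrite expr1n expr2 -absvM mulrNN mulr1 absv1.
rewrite eqrXn2 ?absv_ge0 // => /eqP vN1.
by rewrite -mulN1r absvM vN1 mul1r.
Qed.

Lemma absvV x : v x^-1 = (v x)^-1.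
Proof.
have [->|x_neq0] := eqVneq x 0; first by rewrite invr0 absv0 invr0.
have vx_neq0 : v x != 0 by rewrite gt_eqF ?absv_gt0.
by apply: (mulfI vx_neq0); rewrite -absvM !mulfV ?absv1.
Qed.

Lemma absvD_dominant x y : v y < v x -> v (x + y) = v x.
Proof.
move=> vyx; apply/eqP; rewrite eq_le; apply/andP; split.
  by apply: le_trans (absvD_le x y) _; rewrite ge_max lexx ltW.
have := absvD_le (x + y) (- y); rewrite addrK absvN le_max.
by case/orP => // /(lt_le_trans vyx); rewrite ltxx.
Qed.

End NonArchimedeanAbs.

Section Dynamics.
Variables (K : fieldType) (R : realFieldType) (v : K -> R) (a b : K).
Hypotheses (habs : is_nonarch_abs v) (a_neq0 : a != 0) (b_neq0 : b != 0).
Hypothesis vab : v a < v b.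

Local Notation f := (fmap a b).
Local Notation c := (v b)^-1.

Let va_gt0 : 0 < v a := absv_gt0 habs a_neq0.
Let vb_gt0 : 0 < v b := absv_gt0 habs b_neq0.

Lemma absv_pole : v (pole b) = c.
Proof. by rewrite /pole (absvN habs) (absvV habs). Qed.

Lemma absv_x2 : v (x2 a b) = c.
Proof. by rewrite /x2 (absvV habs) addrC (absvD_dominant habs) ?(absvN habs). Qed.

Lemma absv_sub_pole_small x : v x < c -> v (x - pole b) = c.
Proof. by move=> vx_lt; rewrite addrC (absvD_dominant habs) (absvN habs) absv_pole. Qed.

Lemma absv_sub_pole_large x : c < v x -> v (x - pole b) = v x.
Proof. by move=> vx_gt; rewrite (absvD_dominant habs) // (absvN habs) absv_pole. Qed.

Lemma absv_fmap x : v (f x) = v a * v x ^+ 2 / (v b * v (x - pole b)).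
Proof.
rewrite /fmap; have -> : b * x + 1 = b * (x - pole b) by rewrite /pole opprK mulrDr mulfV.
by rewrite !(absvM habs) (absvV habs) !(absvM habs) expr2.
Qed.

Lemma absv_fmap_small x : v x < c -> v (f x) < c.
Proof.
move=> vx_lt; rewrite absv_fmap absv_sub_pole_small // mulfV ?gt_eqF // divr1.
have c_gt0 : 0 < c by rewrite invr_gt0.
have vxx_le : v x ^+ 2 <= c ^+ 2.
  by rewrite ler_pXn2r ?nnegrE ?(absv_ge0 habs) ?ltW.
apply: (le_lt_trans (ler_wpM2l (ltW va_gt0) vxx_le)).
by rewrite [ltRHS](_ : c = v b * c ^+ 2) ?ltr_pM2r ?exprn_gt0 // expr2 mulrA mulfV ?mul1r ?gt_eqF.
Qed.

Lemma absv_iter_small x n : v x < c -> v (iter n f x) < c.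
Proof. by move=> vx_lt; elim: n => //= n; apply: absv_fmap_small. Qed.

Lemma absv_fmap_large x : c < v x -> v (f x) = v a / v b * v x.
Proof.
move=> vx_gt; have vx_gt0 : 0 < v x by apply: lt_trans vx_gt; rewrite invr_gt0.
by rewrite absv_fmap absv_sub_pole_large //; field; rewrite !gt_eqF.
Qed.

Lemma absv_fmap_large_lt x : c < v x -> v (f x) < v x.
Proof.
move=> vx_gt; have vx_gt0 : 0 < v x by apply: lt_trans vx_gt; rewrite invr_gt0.
by rewrite absv_fmap_large // gtr_pMl // ltr_pdivrMr // mul1r.
Qed.

Lemma absv_fmap_circle x : x <> pole b -> v x = c ->
  v (f x) * v (x - pole b) = v a / v b ^+ 3.
Proof.
move=> xP vx; have d_gt0 : 0 < v (x - pole b).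
  by apply: (absv_gt0 habs); rewrite // subr_eq0; apply/eqP.
by rewrite absv_fmap vx; field; rewrite !gt_eqF.
Qed.

Lemma radius_r1 : radius_r v a b 1 = v b / v a * c.
Proof. by rewrite /radius_r /=; field; rewrite !gt_eqF. Qed.

Lemma radius_rS i : radius_r v a b i.+2 = v b / v a * radius_r v a b i.+1.
Proof.
by rewrite /radius_r /= !exprS; field; rewrite ?mulf_neq0 ?expf_neq0 ?gt_eqF.
Qed.

Lemma radius_l1 : radius_l v a b 1 = c.
Proof. by rewrite /radius_l expr0 expr1 mul1r. Qed.

Lemma mul_radius_l2 : c * radius_l v a b 2 = v a / v b ^+ 3.
Proof. by rewrite /radius_l; field; rewrite gt_eqF. Qed.

Lemma mul_radius_r_l i : (0 < i)%N ->
  radius_r v a b i * radius_l v a b i.+2 = v a / v b ^+ 3.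
Proof.
case: i => // i _; rewrite /radius_r /radius_l /= !exprS.
by field; rewrite ?mulf_neq0 ?expf_neq0 ?gt_eqF.
Qed.

Lemma radius_r_preimage y : c < v y ->
  v (f y) = c \/ (exists2 i, (0 < i)%N & v (f y) = radius_r v a b i) ->
  exists2 i, (0 < i)%N & v y = radius_r v a b i.
Proof.
move=> vy_gt.
have vy : v y = v b / v a * v (f y).
  by rewrite absv_fmap_large //; field; rewrite !gt_eqF.
case=> [fy_c | [[|i] // _ fy_r]]; first by exists 1%N; rewrite // vy fy_c radius_r1.
by exists i.+2; rewrite // vy fy_r radius_rS.
Qed.

Lemma large_orbit_radius_r n y : c < v y ->
  v (iter n f (f y)) = c \/ v y <= v (iter n f (f y)) ->
  exists2 i, (0 < i)%N & v y = radius_r v a b i.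
Proof.
have no_hit_from_small k z y' : v z < c -> c < v y' ->
    ~ (v (iter k f z) = c \/ v y' <= v (iter k f z)).
  move=> /(absv_iter_small k) z_small y'_large [z_c|y'_le]; move: z_small.
    by rewrite z_c ltxx.
  by move=> /(le_lt_trans y'_le)/(lt_trans y'_large); rewrite ltxx.
elim: n y => [|n IHn] y vy_gt hit; apply: radius_r_preimage => //;
  have fy_lt := absv_fmap_large_lt vy_gt;
  have [fy_small|fy_large|] := ltgtP (v (f y)) c; try by left.
- by case: (no_hit_from_small 0%N _ _ fy_small vy_gt).
- by case: hit => /= [fy_c|/(lt_le_trans fy_lt)]; rewrite ?fy_c ltxx in fy_large *.
- by case: (no_hit_from_small n.+1 _ _ fy_small vy_gt).
- right; apply: IHn fy_large _; rewrite -iterSr.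
  by case: hit => [|/(le_trans (ltW fy_lt))]; [left|right].
Qed.

Lemma circle_orbit_radius_l m x : x <> pole b -> v x = c ->
  v (iter m f (f x)) = c -> exists j, v (x - pole b) = radius_l v a b j.
Proof.
move=> xP vx hit; have fx_d := absv_fmap_circle xP vx.
have [fx_small|fx_large|fx_c] := ltgtP (v (f x)) c.
- by have := absv_iter_small m fx_small; rewrite hit ltxx.
- case: m hit => [/= fx_c|m]; first by move: fx_large; rewrite fx_c ltxx.
  rewrite iterSr => hit; have [i i_gt0 fx_r] := large_orbit_radius_r fx_large (or_introl hit).
  have fx_neq0 : v (f x) != 0 by rewrite gt_eqF // (lt_trans _ fx_large) ?invr_gt0.
  by exists i.+2; apply: (mulfI fx_neq0); rewrite fx_d fx_r mul_radius_r_l.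
- have c_neq0 : c != 0 by rewrite invr_eq0 gt_eqF.
  exists 2%N; apply: (mulfI c_neq0).
  by rewrite -fx_c fx_d fx_c mul_radius_l2.
Qed.

Lemma orbit_meets_circle_or_returns x :
  Omega a b x \/ Psi a b x \/ Sigma a b x ->
  x <> pole b /\ exists m, v (iter m f (f x)) = c \/ iter m f (f x) = x.
Proof.
case=> [[xP [[|i] [//= _ [_ hitP]]]] | [[xP [_ [[|j] [//= _ [_ hitx2]]]]] |
         [xP [_ [_ [[|k] [//= _ [_ ret]]]]]]]]; split=> //.
- by exists i; left; rewrite -iterSr iterS hitP absv_pole.
- by exists j; left; rewrite -iterSr iterS hitx2 absv_x2.
- by exists k; right; rewrite -iterSr iterS.
Qed.

End Dynamics.

Theorem corollary3p4 (p : nat) (R : realType) (K : closedFieldType) (v : K -> R)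
  (hK : Cp_like p v) (a b : K) (ha : a != 0) (hb : b != 0) (hab : a != b)
  (hv : v a < v b) (x : K) :
  Omega a b x \/ Psi a b x \/ Sigma a b x ->
  (exists i : nat, (1 <= i)%N /\ sphere v (x1 K) (radius_r v a b i) x) \/
  (exists j : nat, sphere v (pole b) (radius_l v a b j) x).
Proof.
have habs : is_nonarch_abs v by case: hK.
move=> /(orbit_meets_circle_or_returns habs hv) [xP [m hit]].
have [x_small|x_large|x_circle] := ltgtP (v x) (v b)^-1.
- right; exists 1%N.
  by rewrite /sphere radius_l1 (absv_sub_pole_small habs x_small).
- left; have [i i_gt0 vx] : exists2 i, (0 < i)%N & v x = radius_r v a b i.
    apply: (large_orbit_radius_r habs ha hb hv (n := m) x_large).
    by case: hit => [|->]; [left|right].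
  by exists i; rewrite /sphere /x1 subr0.
- right; apply: (circle_orbit_radius_l habs ha hb hv (m := m) xP x_circle).
  by case: hit => [|->].
Qed.
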